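(* Let $r>0$ be real, let $k_r\in(0,1)$ be the singular modulus, $k'^2_r=1-k_r^2$, and let $a(r)$ be the elliptic alpha function. For $n\ge 0$ let $$B^{(2)}_n=\sum_{j=0}^{n}\left[\binom{n}{j}\left(\tfrac12\right)_j\left(\tfrac12\right)_{n-j}\right]^2 .$$ Then $$\sum_{n=0}^{\infty}\frac{B^{(2)}_n}{(n!)^2}\,k_r^{2n}\left(\sqrt r\,k'^2_r\,n+a(r)-\sqrt r\,k_r^2\right)=\frac1\pi .$$
   Context: $K(x)=\int_0^{\pi/2}\frac{dt}{\sqrt{1-x^2\sin^2 t}}$ and $E(x)=\int_0^{\pi/2}\sqrt{1-x^2\sin^2 t}\,dt$. For $r>0$ the singular modulus $k_r\in(0,1)$ is the unique solution $w$ of $K(\sqrt{1-w^2})/K(w)=\sqrt r$. The elliptic alpha function is $a(r)=\frac{\pi}{4K(k_r)^2}-\sqrt r\left(\frac{E(k_r)}{K(k_r)}-1\right)$. $(a)_n=a(a+1)\cdots(a+n-1)$, $(a)_0=1$. *)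

From Stdlib Require Import Reals.
From Coquelicot Require Import Coquelicot.
Open Scope R_scope.

Definition ellK (x : R) : R :=
  RInt (fun t => / sqrt (1 - x ^ 2 * (sin t) ^ 2)) 0 (PI / 2).
Definition ellE (x : R) : R :=
  RInt (fun t => sqrt (1 - x ^ 2 * (sin t) ^ 2)) 0 (PI / 2).

(* w is the singular modulus k_r: w in (0,1) with K(sqrt(1-w^2))/K(w) = sqrt r
   (the solution is unique, so this characterizes k_r). *)
Definition is_singular_modulus (r w : R) : Prop :=
  0 < w < 1 /\ ellK (sqrt (1 - w ^ 2)) / ellK w = sqrt r.

Definition alpha_fn (r k : R) : R :=
  PI / (4 * (ellK k) ^ 2) - sqrt r * (ellE k / ellK k - 1).

Fixpoint poch (a : R) (n : nat) : R :=
  match n with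
  | O => 1
  | S m => poch a m * (a + INR m)
  end.

Definition B2 (n : nat) : R :=
  sum_f_R0 (fun j => (Binomial.C n j * poch (1/2) j * poch (1/2) (n - j)) ^ 2) n.

From Stdlib Require Import Reals Arith Lra Lia Psatz.
From Coquelicot Require Import Coquelicot.
Open Scope R_scope.

(* Put x = k^2 and c_n = ((1/2)_n / n!)^2.  Expanding (1 - x sin^2 t)^(-1/2) and
   (1 - x sin^2 t)^(1/2) binomially and integrating term by term with Wallis' formula
   gives 2K/pi = F(x) := sum c_n x^n, and comparing coefficients shows
   2E/pi = (1 - x) (F + 2 x F').  Since B2_n / (n!)^2 is the Cauchy square of (c_n),
   the series equals s (1 - x) 2 x F F' + (a - s x) F^2 with s = sqrt r; substituting
   K and E, every term carrying s cancels and only pi F^2 / (4 K^2) = 1/pi survives. *)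

Lemma Rabs_lt_CV_radius_bounded (a : nat -> R) (y : R) :
  (forall n, Rabs (a n) <= 1) -> Rabs y < 1 -> Rbar_lt (Rabs y) (CV_radius a).
Proof.
  intros Ha Hy.
  destruct (CV_radius_bounded a) as [Hub _].
  assert (Hy0 : 0 <= Rabs y) by apply Rabs_pos.
  assert (Hr : Rbar_le ((Rabs y + 1) / 2) (CV_radius a)).
  { apply Hub. exists 1. intros n.
    rewrite Rabs_mult, <- RPow_abs.
    apply (Rle_trans _ (1 * 1)); [|lra].
    apply Rmult_le_compat; try apply Rabs_pos; try apply pow_le, Rabs_pos; auto.
    apply (Rle_trans _ (1 ^ n)); [|rewrite pow1; lra].
    apply pow_incr. rewrite Rabs_pos_eq; lra. }
  eapply Rbar_lt_le_trans; [|exact Hr]. simpl. lra.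
Qed.

Lemma is_pseries_bounded (a : nat -> R) (y : R) :
  (forall n, Rabs (a n) <= 1) -> Rabs y < 1 -> is_pseries a y (PSeries a y).
Proof.
  intros Ha Hy. apply PSeries_correct, CV_radius_inside.
  now apply Rabs_lt_CV_radius_bounded.
Qed.

Lemma is_pseries_one_sub_mul (a : nat -> R) (x l : R) :
  is_pseries a x l -> is_pseries (PS_minus a (PS_incr_1 a)) x ((1 - x) * l).
Proof.
  intros H.
  assert (H' := is_pseries_minus _ _ _ _ _ H (is_pseries_incr_1 _ _ _ H)).
  replace ((1 - x) * l) with (plus l (opp (scal x l))); [exact H'|].
  change (l - x * l = (1 - x) * l). ring.
Qed.

Lemma is_series_ge_first (u : nat -> R) (l : R) :
  is_series u l -> (forall n, 0 <= u n) -> u O <= l.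
Proof.
  intros H Hu.
  assert (Hs : forall N, u O <= sum_n u N).
  { induction N as [|N IH]; [rewrite sum_O; lra|].
    rewrite sum_Sn. change (u O <= sum_n u N + u (S N)).
    specialize (Hu (S N)). lra. }
  exact (is_lim_seq_le (fun _ => u O) (sum_n u) (u O) l Hs (is_lim_seq_const _) H).
Qed.

Definition inv_sqrt_coef (n : nat) : R := poch (1/2) n / INR (fact n).

Definition sqrt_coef : nat -> R := PS_minus inv_sqrt_coef (PS_incr_1 inv_sqrt_coef).

Lemma inv_sqrt_coef_0 : inv_sqrt_coef 0 = 1.
Proof. unfold inv_sqrt_coef; simpl; field. Qed.

Lemma inv_sqrt_coef_S n :
  inv_sqrt_coef (S n) = inv_sqrt_coef n * ((INR n + 1/2) / (INR n + 1)).
Proof.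
  unfold inv_sqrt_coef. simpl poch. rewrite fact_simpl, mult_INR, S_INR.
  assert (0 < INR (fact n)) by (apply lt_0_INR, lt_O_fact).
  assert (0 <= INR n) by apply pos_INR.
  field; lra.
Qed.

Lemma inv_sqrt_coef_ratio_bounds n : 0 <= (INR n + 1/2) / (INR n + 1) <= 1.
Proof.
  assert (0 <= INR n) by apply pos_INR.
  split; [apply Rdiv_le_0_compat; lra|].
  apply Rmult_le_reg_r with (INR n + 1); [lra|].
  unfold Rdiv; rewrite Rmult_assoc, Rinv_l; lra.
Qed.

Lemma inv_sqrt_coef_bounds n : 0 <= inv_sqrt_coef n <= 1.
Proof.
  induction n as [|n IH]; [rewrite inv_sqrt_coef_0; lra|].
  rewrite inv_sqrt_coef_S. pose proof (inv_sqrt_coef_ratio_bounds n). nra.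
Qed.

Lemma Rabs_inv_sqrt_coef_le_1 n : Rabs (inv_sqrt_coef n) <= 1.
Proof. destruct (inv_sqrt_coef_bounds n). rewrite Rabs_pos_eq; lra. Qed.

Lemma Rabs_sqrt_coef_le_1 n : Rabs (sqrt_coef n) <= 1.
Proof.
  destruct n as [|n].
  - change (Rabs (inv_sqrt_coef 0 - 0) <= 1).
    rewrite inv_sqrt_coef_0, Rminus_0_r, Rabs_R1; lra.
  - change (Rabs (inv_sqrt_coef (S n) - inv_sqrt_coef n) <= 1).
    rewrite inv_sqrt_coef_S.
    pose proof (inv_sqrt_coef_bounds n). pose proof (inv_sqrt_coef_ratio_bounds n).
    rewrite Rabs_left1 by nra. nra.
Qed.

Lemma inv_sqrt_series_ode y : Rabs y < 1 ->
  (1 - y) * PSeries (PS_derive inv_sqrt_coef) y = PSeries inv_sqrt_coef y / 2.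
Proof.
  intros Hy.
  assert (Hr : Rbar_lt (Rabs y) (CV_radius (PS_derive inv_sqrt_coef))).
  { rewrite CV_radius_derive. exact (Rabs_lt_CV_radius_bounded _ _ Rabs_inv_sqrt_coef_le_1 Hy). }
  assert (HD := is_pseries_one_sub_mul _ _ _ (PSeries_correct _ _ (CV_radius_inside _ _ Hr))).
  rewrite <- (is_pseries_unique _ _ _ HD).
  assert (HS := is_pseries_scal (1/2) _ _ _ (Rmult_comm _ _)
                  (is_pseries_bounded _ y Rabs_inv_sqrt_coef_le_1 Hy)).
  change (scal (1/2) (PSeries inv_sqrt_coef y)) with (1/2 * PSeries inv_sqrt_coef y) in HS.
  replace (PSeries inv_sqrt_coef y / 2) with (1/2 * PSeries inv_sqrt_coef y) by field.
  rewrite <- (is_pseries_unique _ _ _ HS). apply PSeries_ext. intros n.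
  change (PS_minus (PS_derive inv_sqrt_coef) (PS_incr_1 (PS_derive inv_sqrt_coef)) n
          = 1/2 * inv_sqrt_coef n).
  unfold PS_derive. destruct n as [|n].
  - change (INR 1 * inv_sqrt_coef 1 - 0 = 1/2 * inv_sqrt_coef 0).
    rewrite inv_sqrt_coef_S, inv_sqrt_coef_0. simpl. field.
  - change (INR (S (S n)) * inv_sqrt_coef (S (S n)) - INR (S n) * inv_sqrt_coef (S n)
            = 1/2 * inv_sqrt_coef (S n)).
    rewrite (inv_sqrt_coef_S (S n)), !S_INR.
    pose proof (pos_INR n). field. lra.
Qed.

Lemma PSeries_inv_sqrt_coef_ge_1 y : 0 <= y < 1 -> 1 <= PSeries inv_sqrt_coef y.
Proof.
  intros Hy.
  assert (H := is_pseries_bounded _ y Rabs_inv_sqrt_coef_le_1 ltac:(rewrite Rabs_pos_eq; lra)).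
  apply is_pseries_R, is_series_ge_first in H.
  - rewrite inv_sqrt_coef_0 in H. simpl in H. lra.
  - intros n. apply Rmult_le_pos; [apply inv_sqrt_coef_bounds | apply pow_le; lra].
Qed.

(* By [inv_sqrt_series_ode], [g] has derivative 0 on (-1, 1), so it keeps its value 1 at 0. *)
Lemma PSeries_inv_sqrt_coef_sq y : 0 <= y < 1 ->
  PSeries inv_sqrt_coef y ^ 2 * (1 - y) = 1.
Proof.
  intros Hy.
  set (g := fun z => PSeries inv_sqrt_coef z ^ 2 * (1 - z)).
  assert (Hg' : forall z, Rabs z < 1 -> is_derive g z 0).
  { intros z Hz.
    assert (HS := is_derive_PSeries inv_sqrt_coef z
                    (Rabs_lt_CV_radius_bounded _ _ Rabs_inv_sqrt_coef_le_1 Hz)).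
    assert (Hode := inv_sqrt_series_ode z Hz).
    assert (H1 : is_derive (fun t => 1 - t) z (-1)) by (auto_derive; [auto | ring]).
    assert (H := is_derive_mult _ _ _ _ _ (is_derive_pow _ 2 _ _ HS) H1 Rmult_comm).
    match type of H with is_derive _ _ ?v => replace 0 with v; [exact H|] end.
    unfold plus, mult; simpl. nra. }
  destruct (MVT_gen g 0 y (fun _ => 0)) as [c [_ Hc]].
  - intros x Hx. apply Hg'. rewrite Rmin_left, Rmax_right in Hx by lra.
    rewrite Rabs_pos_eq; lra.
  - intros x Hx. rewrite Rmin_left, Rmax_right in Hx by lra.
    apply continuity_pt_filterlim, (ex_derive_continuous g).
    exists 0. apply Hg'. rewrite Rabs_pos_eq; lra.
  - assert (Hg0 : g 0 = 1) by (unfold g; rewrite PSeries_0, inv_sqrt_coef_0; ring).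
    unfold g in Hc, Hg0. lra.
Qed.

Lemma is_pseries_inv_sqrt y : 0 <= y < 1 -> is_pseries inv_sqrt_coef y (/ sqrt (1 - y)).
Proof.
  intros Hy.
  assert (Hsq := PSeries_inv_sqrt_coef_sq y Hy).
  assert (H1 := PSeries_inv_sqrt_coef_ge_1 y Hy).
  assert (Hs : 0 < sqrt (1 - y)) by (apply sqrt_lt_R0; lra).
  assert (Hs2 : sqrt (1 - y) * sqrt (1 - y) = 1 - y) by (apply sqrt_sqrt; lra).
  replace (/ sqrt (1 - y)) with (PSeries inv_sqrt_coef y).
  - apply is_pseries_bounded; [exact Rabs_inv_sqrt_coef_le_1 | rewrite Rabs_pos_eq; lra].
  - set (P := PSeries inv_sqrt_coef y * sqrt (1 - y)).
    assert (HP2 : P * P = 1) by (unfold P; simpl in Hsq; nra).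
    assert (HP : 0 < P) by (unfold P; nra).
    assert (E : P = 1) by nra.
    unfold P in E. field_simplify_eq; lra.
Qed.

Lemma is_pseries_sqrt y : 0 <= y < 1 -> is_pseries sqrt_coef y (sqrt (1 - y)).
Proof.
  intros Hy.
  assert (H := is_pseries_one_sub_mul _ _ _ (is_pseries_inv_sqrt y Hy)).
  replace (sqrt (1 - y)) with ((1 - y) * / sqrt (1 - y)); [exact H|].
  assert (Hs : 0 < sqrt (1 - y)) by (apply sqrt_lt_R0; lra).
  rewrite <- (sqrt_sqrt (1 - y)) at 1 by lra. field. lra.
Qed.

Definition wallis (n : nat) : R := RInt (fun t => sin t ^ (2 * n)) 0 (PI / 2).

Lemma ex_RInt_sin_pow m a b : ex_RInt (fun t => sin t ^ m) a b.
Proof.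
  apply (ex_RInt_continuous (V := R_CompleteNormedModule)). intros t _.
  apply (ex_derive_continuous (fun t => sin t ^ m)). auto_derive. auto.
Qed.

(* Integration by parts, through the antiderivative [cos t * sin t ^ (2n+1)]. *)
Lemma wallis_S n : wallis (S n) = wallis n * ((INR n + 1/2) / (INR n + 1)).
Proof.
  set (m := (2 * n)%nat).
  set (df := fun t => INR (S m) * sin t ^ m - INR (S (S m)) * sin t ^ S (S m)).
  set (f := fun t => cos t * sin t ^ S m).
  assert (Hparts : is_RInt df 0 (PI / 2) (minus (f (PI / 2)) (f 0))).
  { apply (is_RInt_derive (V := R_CompleteNormedModule)).
    - intros t _. unfold f, df. auto_derive; [auto|].
      change (match m with 0%nat => 1 | S _ => INR m + 1 end) with (INR (S m)).
      rewrite !S_INR. simpl pow.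
      assert (Hc : cos t * cos t = 1 - sin t * sin t)
        by (pose proof (sin2_cos2 t); unfold Rsqr in *; lra).
      replace (cos t * (1 * cos t * ((INR m + 1) * sin t ^ m)))
        with (cos t * cos t * ((INR m + 1) * sin t ^ m)) by ring.
      rewrite Hc. ring.
    - intros t _. apply (ex_derive_continuous df). unfold df. auto_derive. auto. }
  assert (Hf : minus (f (PI / 2)) (f 0) = 0).
  { change (cos (PI / 2) * sin (PI / 2) ^ S m - cos 0 * sin 0 ^ S m = 0).
    rewrite cos_PI2, sin_0. simpl. ring. }
  rewrite Hf in Hparts.
  assert (Hm : is_RInt (fun t => sin t ^ m) 0 (PI / 2) (wallis n))
    by exact (RInt_correct _ _ _ (ex_RInt_sin_pow m 0 (PI / 2))).
  assert (HSm : is_RInt (fun t => sin t ^ S (S m)) 0 (PI / 2) (wallis (S n))).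
  { unfold wallis. replace (2 * S n)%nat with (S (S m)) by (unfold m; lia).
    exact (RInt_correct _ _ _ (ex_RInt_sin_pow _ 0 (PI / 2))). }
  assert (Hdf : is_RInt df 0 (PI / 2)
                  (INR (S m) * wallis n - INR (S (S m)) * wallis (S n)))
    by exact (is_RInt_minus _ _ _ _ _ _ (is_RInt_scal _ _ _ (INR (S m)) _ Hm)
                (is_RInt_scal _ _ _ (INR (S (S m))) _ HSm)).
  assert (E := is_RInt_unique _ _ _ _ Hdf).
  rewrite (is_RInt_unique _ _ _ _ Hparts) in E.
  unfold m in E. rewrite !S_INR, mult_INR in E. simpl (INR 2) in E.
  pose proof (pos_INR n). field_simplify_eq; [|lra]. lra.
Qed.

Lemma wallis_eq n : wallis n = PI / 2 * inv_sqrt_coef n.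
Proof.
  induction n as [|n IH].
  - unfold wallis. simpl. rewrite RInt_const, inv_sqrt_coef_0.
    change ((PI / 2 - 0) * 1 = PI / 2 * 1). ring.
  - rewrite wallis_S, inv_sqrt_coef_S, IH. ring.
Qed.

Lemma is_series_tail_le_geom (u : nat -> R) (l x : R) : 0 <= x < 1 ->
  (forall n, Rabs (u n) <= x ^ n) -> is_series u l ->
  forall N, Rabs (l - sum_n u N) <= x ^ S N / (1 - x).
Proof.
  intros Hx Hu Hl N.
  assert (Hm : forall m, Rabs (sum_n u (m + N) - sum_n u N) <= x ^ S N * (1 - x ^ m) / (1 - x)).
  { induction m as [|m IH].
    - rewrite Nat.add_0_l, Rminus_diag, Rabs_R0. simpl pow.
      replace (x ^ S N * (1 - 1) / (1 - x)) with 0 by (field; lra). lra.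
    - rewrite Nat.add_succ_l, sum_Sn.
      change (plus (sum_n u (m + N)) (u (S (m + N)))) with (sum_n u (m + N) + u (S (m + N))).
      replace (sum_n u (m + N) + u (S (m + N)) - sum_n u N)
        with ((sum_n u (m + N) - sum_n u N) + u (S (m + N))) by ring.
      eapply Rle_trans; [apply Rabs_triang|].
      eapply Rle_trans; [apply Rplus_le_compat; [exact IH | apply Hu]|].
      replace (x ^ S (m + N)) with (x ^ S N * x ^ m) by (rewrite <- pow_add; f_equal; lia).
      right. simpl. field. lra. }
  assert (Hlim : is_lim_seq (fun m => Rabs (sum_n u (m + N) - sum_n u N))
                   (Rabs (l - sum_n u N))).
  { apply (is_lim_seq_abs _ (Finite (l - sum_n u N))).
    apply (is_lim_seq_minus _ _ l (sum_n u N)); [|apply is_lim_seq_const|reflexivity].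
    exact (proj1 (is_lim_seq_incr_n (sum_n u) N l) Hl). }
  assert (Hb : forall m, Rabs (sum_n u (m + N) - sum_n u N) <= x ^ S N / (1 - x)).
  { intros m. eapply Rle_trans; [apply Hm|]. unfold Rdiv.
    apply Rmult_le_compat_r; [left; apply Rinv_0_lt_compat; lra|].
    assert (0 <= x ^ m) by (apply pow_le; lra).
    assert (0 <= x ^ S N) by (apply pow_le; lra). nra. }
  exact (is_lim_seq_le _ _ _ _ Hb Hlim (is_lim_seq_const _)).
Qed.

Lemma pseries_partial_sums_unif (a : nat -> R) (h : R -> R) (x : R) (y : R -> R) :
  0 <= x < 1 -> (forall n, Rabs (a n) <= 1) ->
  (forall z, 0 <= z <= x -> is_pseries a z (h z)) -> (forall t, 0 <= y t <= x) ->
  filterlim (fun N t => sum_n (fun n => a n * y t ^ n) N) eventually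
    (locally (T := fct_UniformSpace R R_CompleteNormedModule) (fun t => h (y t))).
Proof.
  intros Hx Ha Hh Hy P [eps HP].
  assert (Heps : 0 < eps * (1 - x)) by (destruct eps; simpl; nra).
  destruct (pow_lt_1_zero x ltac:(rewrite Rabs_pos_eq; lra) _ Heps) as [N0 HN0].
  exists N0. intros N HN. apply HP. intros t.
  assert (Htail : Rabs (h (y t) - sum_n (fun n => a n * y t ^ n) N) <= x ^ S N / (1 - x)).
  { apply is_series_tail_le_geom; [exact Hx| |apply is_pseries_R, Hh, Hy].
    intros n. rewrite Rabs_mult, <- RPow_abs, (Rabs_pos_eq (y t)) by apply Hy.
    rewrite <- (Rmult_1_l (x ^ n)).
    apply Rmult_le_compat; [apply Rabs_pos|apply pow_le, Hy|apply Ha|apply pow_incr, Hy]. }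
  assert (HxN := HN0 (S N) ltac:(lia)).
  rewrite Rabs_pos_eq in HxN by (apply pow_le; lra).
  change (Rabs (sum_n (fun n => a n * y t ^ n) N - h (y t)) < eps).
  rewrite Rabs_minus_sym. eapply Rle_lt_trans; [exact Htail|].
  apply Rmult_lt_reg_r with (1 - x); [lra|].
  unfold Rdiv. rewrite Rmult_assoc, Rinv_l; lra.
Qed.

Lemma is_pseries_RInt_sin2 (a : nat -> R) (h : R -> R) (x : R) :
  0 <= x < 1 -> (forall n, Rabs (a n) <= 1) ->
  (forall z, 0 <= z <= x -> is_pseries a z (h z)) ->
  is_pseries (fun n => a n * wallis n) x (RInt (fun t => h (x * sin t ^ 2)) 0 (PI / 2)).
Proof.
  intros Hx Ha Hh.
  set (y := fun t => x * sin t ^ 2).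
  assert (Hy : forall t, 0 <= y t <= x).
  { intros t. pose proof (Rtrigo_facts.sin2_bound t) as Hs. unfold Rsqr in Hs. unfold y. simpl. nra. }
  assert (Hterm : forall n, is_RInt (fun t => a n * y t ^ n) 0 (PI / 2) (a n * wallis n * x ^ n)).
  { intros n.
    replace (a n * wallis n * x ^ n) with (scal (a n * x ^ n) (wallis n))
      by (change (a n * x ^ n * wallis n = a n * wallis n * x ^ n); ring).
    eapply is_RInt_ext;
      [|exact (is_RInt_scal _ _ _ _ _ (RInt_correct _ _ _ (ex_RInt_sin_pow (2 * n) 0 (PI / 2))))].
    intros t _. unfold y. rewrite Rpow_mult_distr, pow_mult.
    change (a n * x ^ n * (sin t ^ 2) ^ n = a n * (x ^ n * (sin t ^ 2) ^ n)). ring. }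
  assert (Hsums : forall N, is_RInt (fun t => sum_n (fun n => a n * y t ^ n) N) 0 (PI / 2)
                    (sum_n (fun n => a n * wallis n * x ^ n) N)).
  { induction N as [|N IH].
    - apply (is_RInt_ext (fun t => a 0%nat * y t ^ 0)); [intros t _; now rewrite sum_O|].
      rewrite sum_O. apply Hterm.
    - apply (is_RInt_ext (fun t => plus (sum_n (fun n => a n * y t ^ n) N)
                                        (a (S N) * y t ^ S N)));
        [intros t _; now rewrite sum_Sn|].
      rewrite sum_Sn. exact (is_RInt_plus _ _ _ _ _ _ IH (Hterm (S N))). }
  destruct (filterlim_RInt _ 0 (PI / 2) eventually _ _ _ Hsums
              (pseries_partial_sums_unif a h x y Hx Ha Hh Hy)) as [I [HI HgI]].
  apply is_pseries_R.
  replace (RInt (fun t => h (x * sin t ^ 2)) 0 (PI / 2)) with I; [exact HI|].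
  symmetry. exact (is_RInt_unique _ _ _ _ HgI).
Qed.

Definition ellK_coef (n : nat) : R := inv_sqrt_coef n ^ 2.

Lemma Rabs_ellK_coef_le_1 n : Rabs (ellK_coef n) <= 1.
Proof.
  unfold ellK_coef. destruct (inv_sqrt_coef_bounds n).
  rewrite Rabs_pos_eq; simpl; nra.
Qed.

Lemma is_pseries_ellK k : k ^ 2 < 1 -> is_pseries ellK_coef (k ^ 2) (2 / PI * ellK k).
Proof.
  intros Hk. assert (Hx : 0 <= k ^ 2 < 1) by (split; [apply pow2_ge_0 | exact Hk]).
  assert (H := is_pseries_RInt_sin2 _ (fun y => / sqrt (1 - y)) _ Hx Rabs_inv_sqrt_coef_le_1
                 (fun y Hy => is_pseries_inv_sqrt y ltac:(lra))).
  eapply is_pseries_ext; [|exact (is_pseries_scal (2 / PI) _ _ _ (Rmult_comm _ _) H)].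
  intros n. change (2 / PI * (inv_sqrt_coef n * wallis n) = inv_sqrt_coef n ^ 2).
  rewrite wallis_eq. pose proof PI_RGT_0. field. lra.
Qed.

Lemma is_pseries_ellE k : k ^ 2 < 1 ->
  is_pseries (fun n => sqrt_coef n * inv_sqrt_coef n) (k ^ 2) (2 / PI * ellE k).
Proof.
  intros Hk. assert (Hx : 0 <= k ^ 2 < 1) by (split; [apply pow2_ge_0 | exact Hk]).
  assert (H := is_pseries_RInt_sin2 _ (fun y => sqrt (1 - y)) _ Hx Rabs_sqrt_coef_le_1
                 (fun y Hy => is_pseries_sqrt y ltac:(lra))).
  eapply is_pseries_ext; [|exact (is_pseries_scal (2 / PI) _ _ _ (Rmult_comm _ _) H)].
  intros n. change (2 / PI * (sqrt_coef n * wallis n) = sqrt_coef n * inv_sqrt_coef n).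
  rewrite wallis_eq. pose proof PI_RGT_0. field. lra.
Qed.

Lemma PI_div_2_le_ellK k : k ^ 2 < 1 -> PI / 2 <= ellK k.
Proof.
  intros Hk. assert (H := proj1 (is_pseries_R _ _ _) (is_pseries_ellK k Hk)).
  apply is_series_ge_first in H.
  - unfold ellK_coef in H. rewrite inv_sqrt_coef_0 in H. simpl in H.
    pose proof PI_RGT_0. apply Rmult_le_reg_l with (2 / PI).
    + apply Rdiv_lt_0_compat; lra.
    + replace (2 / PI * (PI / 2)) with 1 by (field; lra). lra.
  - intros n. apply Rmult_le_pos; [unfold ellK_coef; apply pow2_ge_0|].
    apply pow_le, pow2_ge_0.
Qed.

Lemma CV_radius_INR_mul (a : nat -> R) : CV_radius (fun n => INR n * a n) = CV_radius a.
Proof.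
  rewrite <- (CV_radius_derive a), <- (CV_radius_incr_1 (PS_derive a)).
  apply CV_radius_ext.
  intros [|n]; [change (INR 0 * a 0%nat = 0); simpl; ring | reflexivity].
Qed.

Lemma is_pseries_INR_mul (a : nat -> R) (x : R) : Rbar_lt (Rabs x) (CV_radius a) ->
  is_pseries (fun n => INR n * a n) x (x * PSeries (PS_derive a) x).
Proof.
  intros Hx.
  eapply is_pseries_ext;
    [|exact (is_pseries_incr_1 _ _ _ (PSeries_correct _ _ (ex_pseries_derive _ _ Hx)))].
  intros [|n]; [change (0 = INR 0 * a 0%nat); simpl; ring | reflexivity].
Qed.

Lemma INR_mul_PS_mult (a b : nat -> R) (n : nat) :
  INR n * PS_mult a b n =
  PS_mult (fun k => INR k * a k) b n + PS_mult a (fun k => INR k * b k) n.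
Proof.
  unfold PS_mult. rewrite <- sum_plus, scal_sum. apply sum_eq.
  intros j Hj. rewrite minus_INR by exact Hj. ring.
Qed.

Lemma B2_div_fact_sq n : B2 n / INR (fact n) ^ 2 = PS_mult ellK_coef ellK_coef n.
Proof.
  unfold B2, PS_mult, Rdiv. rewrite Rmult_comm, scal_sum. apply sum_eq. intros j Hj.
  unfold Binomial.C, ellK_coef, inv_sqrt_coef.
  pose proof (lt_0_INR _ (lt_O_fact n)). pose proof (lt_0_INR _ (lt_O_fact j)).
  pose proof (lt_0_INR _ (lt_O_fact (n - j))).
  change (1 * / 2) with (1 / 2). field. lra.
Qed.

Lemma Rabs_lt_CV_radius_ellK_coef k : k ^ 2 < 1 ->
  Rbar_lt (Rabs (k ^ 2)) (CV_radius ellK_coef).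
Proof.
  intros Hk. apply Rabs_lt_CV_radius_bounded; [exact Rabs_ellK_coef_le_1|].
  rewrite Rabs_pos_eq by apply pow2_ge_0. exact Hk.
Qed.

(* Coefficientwise form of the classical relation E = k'^2 (K + 2 k^2 dK/d(k^2)). *)
Lemma ellE_ellK_relation k : k ^ 2 < 1 ->
  2 / PI * ellE k =
  (1 - k ^ 2) * (2 / PI * ellK k + 2 * (k ^ 2 * PSeries (PS_derive ellK_coef) (k ^ 2))).
Proof.
  intros Hk.
  assert (HK := is_pseries_ellK k Hk).
  assert (HnK := is_pseries_INR_mul _ _ (Rabs_lt_CV_radius_ellK_coef k Hk)).
  assert (Hrel := is_pseries_one_sub_mul _ _ _
                    (is_pseries_plus _ _ _ _ _ HK (is_pseries_scal 2 _ _ _ (Rmult_comm _ _) HnK))).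
  rewrite <- (is_pseries_unique _ _ _ (is_pseries_ellE k Hk)).
  apply is_pseries_unique. eapply is_pseries_ext; [|exact Hrel]. intros [|n].
  - change (ellK_coef 0 + 2 * (INR 0 * ellK_coef 0) - 0
            = sqrt_coef 0 * inv_sqrt_coef 0).
    change (sqrt_coef 0) with (inv_sqrt_coef 0 - 0).
    unfold ellK_coef. rewrite inv_sqrt_coef_0. simpl. ring.
  - change (ellK_coef (S n) + 2 * (INR (S n) * ellK_coef (S n))
              - (ellK_coef n + 2 * (INR n * ellK_coef n))
            = (inv_sqrt_coef (S n) - inv_sqrt_coef n) * inv_sqrt_coef (S n)).
    unfold ellK_coef. rewrite inv_sqrt_coef_S, S_INR.
    pose proof (pos_INR n). field. lra.
Qed.

Lemma ramanujan_series_any_modulus (s k : R) : k ^ 2 < 1 ->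
  is_series
    (fun n : nat =>
       B2 n / INR (fact n) ^ 2 * k ^ (2 * n) *
       (s * (1 - k ^ 2) * INR n
        + (PI / (4 * ellK k ^ 2) - s * (ellE k / ellK k - 1)) - s * k ^ 2))
    (1 / PI).
Proof.
  intros Hk.
  set (x := k ^ 2) in *.
  set (F := 2 / PI * ellK k).
  set (D := x * PSeries (PS_derive ellK_coef) x).
  set (alpha := PI / (4 * ellK k ^ 2) - s * (ellE k / ellK k - 1)).
  assert (Hr := Rabs_lt_CV_radius_ellK_coef k Hk).
  assert (HrN : Rbar_lt (Rabs x) (CV_radius (fun n => INR n * ellK_coef n)))
    by (rewrite CV_radius_INR_mul; exact Hr).
  assert (HK : is_pseries ellK_coef x F) by exact (is_pseries_ellK k Hk).
  assert (HnK : is_pseries (fun n => INR n * ellK_coef n) x D)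
    by exact (is_pseries_INR_mul _ _ Hr).
  assert (HKK := is_pseries_mult _ _ _ _ _ HK HK Hr Hr).
  assert (HnKK := is_pseries_plus _ _ _ _ _ (is_pseries_mult _ _ _ _ _ HnK HK HrN Hr)
                    (is_pseries_mult _ _ _ _ _ HK HnK Hr HrN)).
  assert (Hsum := is_pseries_plus _ _ _ _ _
                    (is_pseries_scal (s * (1 - x)) _ _ _ (Rmult_comm _ _) HnKK)
                    (is_pseries_scal (alpha - s * x) _ _ _ (Rmult_comm _ _) HKK)).
  apply is_pseries_R in Hsum.
  assert (Hval : s * (1 - x) * (D * F + F * D) + (alpha - s * x) * (F * F) = 1 / PI).
  { assert (HE := ellE_ellK_relation k Hk). fold x F D in HE.
    pose proof (PI_div_2_le_ellK k Hk). pose proof PI_RGT_0.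
    unfold alpha. replace (ellK k) with (PI / 2 * F) by (unfold F; field; lra).
    replace (ellE k) with (PI / 2 * (2 / PI * ellE k)) by (field; lra).
    rewrite HE. unfold F. field. lra. }
  rewrite <- Hval. eapply is_series_ext; [|exact Hsum].
  intros n. rewrite B2_div_fact_sq, pow_mult. fold x.
  change ((s * (1 - x) * (PS_mult (fun n => INR n * ellK_coef n) ellK_coef n
                          + PS_mult ellK_coef (fun n => INR n * ellK_coef n) n)
           + (alpha - s * x) * PS_mult ellK_coef ellK_coef n) * x ^ n
          = PS_mult ellK_coef ellK_coef n * x ^ n * (s * (1 - x) * INR n + alpha - s * x)).
  rewrite <- INR_mul_PS_mult. ring.
Qed.

Theorem theorem2p2 (r k : R) (hr : 0 < r) (hk : is_singular_modulus r k) :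
  is_series
    (fun n : nat =>
       B2 n / (INR (fact n)) ^ 2 * k ^ (2 * n) *
       (sqrt r * (1 - k ^ 2) * INR n + alpha_fn r k - sqrt r * k ^ 2))
    (1 / PI).
Proof.
  destruct hk as [[hk0 hk1] _].
  apply ramanujan_series_any_modulus. simpl. nra.
Qed.
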